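(* For each completely regular frame $L$, $\overline{\mathrm{C}}(\mathfrak{B}(L))$ is isomorphic to the Dedekind–MacNeille completion of $\overline{\mathrm{C}}(L)$.
   Context: $\mathbb{Q}$ is the rationals; $a^\ast$ is the pseudocomplement; $\mathfrak{B}(L)=\{a\in L\mid a=a^{\ast\ast}\}$ is the Booleanization of $L$ (a complete Boolean algebra, hence a frame). The frame $\mathfrak{L}(\overline{\mathbb{IR}})$ is presented by generators $(r,\textsf{---})$, $(\textsf{---},s)$ ($r,s\in\mathbb{Q}$) subject to (r1) $(r,\textsf{---})\wedge(\textsf{---},s)=0$ whenever $r\ge s$; (r3) $(r,\textsf{---})=\bigvee_{s>r}(s,\textsf{---})$; (r4) $(\textsf{---},s)=\bigvee_{r<s}(\textsf{---},r)$. For a frame $M$, $\overline{\mathrm{C}}(M)$ is the set of frame homomorphisms $f\colon\mathfrak{L}(\overline{\mathbb{IR}})\to M$ with $f(r,\textsf{---})\vee f(\textsf{---},s)=1$ whenever $r<s$ (extended continuous real functions), ordered by $f\le g$ iff $f(r,\textsf{---})\le g(r,\textsf{---})$ and $g(\textsf{---},s)\le f(\textsf{---},s)$ for all $r,s$. A Dedekind–MacNeille completion of a poset is a join- and meet-dense embedding into a complete lattice. *)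

From mathcomp Require Import all_boot all_order all_algebra.
Set Implicit Arguments. Unset Strict Implicit. Unset Printing Implicit Defensive.
Import Order.TTheory GRing.Theory Num.Theory.
Local Open Scope ring_scope.

Record frameOps := FrameOps {
  fcar :> Type;
  fle : fcar -> fcar -> Prop;
  fsup : (fcar -> Prop) -> fcar;
  fmeet : fcar -> fcar -> fcar
}.

Record is_frame (L : frameOps) : Prop := {
  fle_refl : forall x : L, fle x x;
  fle_trans : forall x y z : L, fle x y -> fle y z -> fle x z;
  fle_anti : forall x y : L, fle x y -> fle y x -> x = y;
  fsup_ub : forall (S : L -> Prop) x, S x -> fle x (fsup S);
  fsup_least : forall (S : L -> Prop) b, (forall x, S x -> fle x b) -> fle (fsup S) b;
  fmeet_lbl : forall x y : L, fle (fmeet x y) x;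
  fmeet_lbr : forall x y : L, fle (fmeet x y) y;
  fmeet_glb : forall x y z : L, fle z x -> fle z y -> fle z (fmeet x y);
  fdistr : forall (a : L) (S : L -> Prop),
      fmeet a (fsup S) = fsup (fun y => exists s, S s /\ y = fmeet a s)
}.

Record frame := Frame { fops :> frameOps; fax : is_frame fops }.

Section Derived.
Variable L : frameOps.
Definition fbot : L := fsup (fun _ : L => False).
Definition ftop : L := fsup (fun _ : L => True).
Definition fjoin (a b : L) : L := fsup (fun x => x = a \/ x = b).
Definition pc (a : L) : L := fsup (fun x => fmeet x a = fbot).
End Derived.

Definition rather_below (L : frameOps) (a b : L) : Prop :=
  fjoin (pc a) b = ftop L.

Definition completely_below (L : frameOps) (a b : L) : Prop :=
  exists c : rat -> L, c 0 = a /\ c 1 = b /\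
    forall p q : rat, 0 <= p -> p < q -> q <= 1 -> rather_below (c p) (c q).

Definition completely_regular (L : frameOps) : Prop :=
  forall a : L, a = fsup (fun x => completely_below x a).

Section PC.
Variable L : frame.
Let A := fax L.

Lemma fbot_least (x : L) : fle (fbot L) x.
Proof. apply: (fsup_least A) => y []. Qed.

Lemma fmeet_comm (x y : L) : fmeet x y = fmeet y x.
Proof.
apply: (fle_anti A); apply: (fmeet_glb A);
  solve [apply: (fmeet_lbl A) | apply: (fmeet_lbr A)].
Qed.

Lemma fmeet_mono (x x' y : L) : fle x x' -> fle (fmeet x y) (fmeet x' y).
Proof.
move=> h; apply: (fmeet_glb A); last exact: (fmeet_lbr A).
exact: (fle_trans A (fmeet_lbl A _ _) h).
Qed.

Lemma pc_spec (x a : L) : fle x (pc a) <-> fmeet x a = fbot L.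
Proof.
split; last by move=> h; apply: (fsup_ub A).
move=> h; apply: (fle_anti A); last exact: fbot_least.
apply: (fle_trans A (fmeet_mono a h)).
rewrite /pc fmeet_comm (fdistr A).
apply: (fsup_least A) => y [s [hs ->]].
by rewrite fmeet_comm hs; apply: (fle_refl A).
Qed.

Lemma pc_pc_ge (x : L) : fle x (pc (pc x)).
Proof.
apply/pc_spec; rewrite fmeet_comm; apply/pc_spec; exact: (fle_refl A).
Qed.

Lemma pc_anti (x y : L) : fle x y -> fle (pc y) (pc x).
Proof.
move=> h; apply/pc_spec; apply: (fle_anti A); last exact: fbot_least.
rewrite fmeet_comm.
apply: (fle_trans A (fmeet_mono (pc y) h)); rewrite fmeet_comm.
move/pc_spec: (fle_refl A (pc y)) => ->; exact: (fle_refl A).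
Qed.

Lemma pc3 (x : L) : pc (pc (pc x)) = pc x.
Proof.
apply: (fle_anti A); last exact: pc_pc_ge.
apply: pc_anti; exact: pc_pc_ge.
Qed.

Lemma regular_pcpc (x : L) : pc (pc x) = pc (pc (pc (pc x))).
Proof. by rewrite pc3. Qed.

Lemma regular_meet (a b : L) : a = pc (pc a) -> b = pc (pc b) ->
  fmeet a b = pc (pc (fmeet a b)).
Proof.
move=> ha hb; apply: (fle_anti A); first exact: pc_pc_ge.
apply: (fmeet_glb A).
  by rewrite {2}ha; apply/pc_anti/pc_anti; apply: (fmeet_lbl A).
by rewrite {2}hb; apply/pc_anti/pc_anti; apply: (fmeet_lbr A).
Qed.

Definition Bcar := {a : L | a = pc (pc a)}.

Definition Bsup (S : Bcar -> Prop) : Bcar :=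
  exist _ (pc (pc (fsup (fun x => exists y : Bcar, S y /\ x = proj1_sig y))))
        (regular_pcpc _).

Definition Bmeet (a b : Bcar) : Bcar :=
  exist _ (fmeet (proj1_sig a) (proj1_sig b))
        (regular_meet (proj2_sig a) (proj2_sig b)).

Definition Ble (a b : Bcar) : Prop := fle (proj1_sig a) (proj1_sig b).

End PC.

Definition Booleanization (L : frame) : frameOps :=
  @FrameOps (Bcar L) (@Ble L) (@Bsup L) (@Bmeet L).

(* Extended continuous real functions on a frame M.                    *)
(* A frame homomorphism  f : L(IR-bar) -> M  is, by definition of the  *)
(* presented frame L(IR-bar), the same as an assignment of the         *)
(* generators  (r,-) |-> cl r,  (-,s) |-> cu s  in M satisfying the    *)
(* relations (r1), (r3), (r4) in M.                                    *)

Record cbar (M : frameOps) := Cbar {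
  cl : rat -> M;
  cu : rat -> M;
  cbar_r1 : forall r s : rat, s <= r -> fmeet (cl r) (cu s) = fbot M;
  cbar_r3 : forall r : rat, cl r = fsup (fun x => exists s : rat, r < s /\ x = cl s);
  cbar_r4 : forall s : rat, cu s = fsup (fun x => exists r : rat, r < s /\ x = cu r);
  cbar_ext : forall r s : rat, r < s -> fjoin (cl r) (cu s) = ftop M
}.

Definition cbar_le (M : frameOps) (f g : cbar M) : Prop :=
  (forall r : rat, fle (cl f r) (cl g r)) /\ (forall s : rat, fle (cu g s) (cu f s)).

Definition is_lub (T : Type) (le : T -> T -> Prop) (S : T -> Prop) (x : T) : Prop :=
  (forall y, S y -> le y x) /\ (forall z, (forall y, S y -> le y z) -> le x z).

Definition is_glb (T : Type) (le : T -> T -> Prop) (S : T -> Prop) (x : T) : Prop :=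
  (forall y, S y -> le x y) /\ (forall z, (forall y, S y -> le z y) -> le z x).

Definition complete_lattice (T : Type) (le : T -> T -> Prop) : Prop :=
  [/\ (forall x, le x x),
      (forall x y z, le x y -> le y z -> le x z),
      (forall x y, le x y -> le y x -> x = y)
    & (forall S : T -> Prop, exists x, is_lub le S x)].

Definition DM_completion (P Q : Type) (leP : P -> P -> Prop) (leQ : Q -> Q -> Prop)
    (e : P -> Q) : Prop :=
  [/\ complete_lattice leQ,
      (forall x y, leP x y <-> leQ (e x) (e y)),
      (forall y, is_lub leQ (fun z => exists x, z = e x /\ leQ z y) y)
    & (forall y, is_glb leQ (fun z => exists x, z = e x /\ leQ y z) y)].

From mathcomp Require Import all_boot all_order all_algebra.
From mathcomp Require Import ring lra.
From Stdlib Require Import FunctionalExtensionality PropExtensionality ProofIrrelevance.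
Set Implicit Arguments. Unset Strict Implicit. Unset Printing Implicit Defensive.
Import Order.TTheory GRing.Theory Num.Theory.
Local Open Scope ring_scope.

(* B(L) is Boolean, and in a Boolean frame "rather below" is just [<=], so any
   family of lower halves satisfying (r3) extends to an element of C(B(L)); this
   makes C(B(L)) a complete lattice, with pointwise joins of lower halves.
   Double pseudocomplementation f |-> f** is an order embedding of C(L) into
   C(B(L)): f(s,-)** <= f(r,-) for r < s, since f(s,-) is rather below f(r,-).
   For join density, complete regularity writes each g(s,-) as a join of
   elements a completely below it; a scale from a to g(s,-) yields, Urysohn
   style, some f in C(L) with f** <= g and a <= f(r,-) for all r < s.  Meet
   density follows from join density through the order reversing involution
   f |-> -f. *)

Lemma fsup_ext (M : frameOps) (S T : M -> Prop) :
  (forall x, S x <-> T x) -> fsup S = fsup T.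
Proof.
move=> ST; congr fsup; apply: functional_extensionality => x.
exact: propositional_extensionality.
Qed.

Section FrameTheory.
Variable M : frame.
Let A := fax M.

Lemma fle_ftop (x : M) : fle x (ftop M).
Proof. exact: (fsup_ub A). Qed.

Lemma ftop_le_eq (x : M) : fle (ftop M) x -> x = ftop M.
Proof. by move=> h; apply: (fle_anti A) => //; apply: fle_ftop. Qed.

Lemma fle_fbot_eq (x : M) : fle x (fbot M) -> x = fbot M.
Proof. by move=> h; apply: (fle_anti A) => //; apply: fbot_least. Qed.

Lemma fjoin_ubl (a b : M) : fle a (fjoin a b).
Proof. by apply: (fsup_ub A); left. Qed.

Lemma fjoin_ubr (a b : M) : fle b (fjoin a b).
Proof. by apply: (fsup_ub A); right. Qed.

Lemma fjoin_least (a b c : M) : fle a c -> fle b c -> fle (fjoin a b) c.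
Proof. by move=> ac bc; apply: (fsup_least A) => x [->|->]. Qed.

Lemma fjoinC (a b : M) : fjoin a b = fjoin b a.
Proof. by apply: fsup_ext => x; split => -[]; auto. Qed.

Lemma fjoin_mono (a a' b b' : M) :
  fle a a' -> fle b b' -> fle (fjoin a b) (fjoin a' b').
Proof.
move=> aa' bb'; apply: fjoin_least.
  exact: (fle_trans A aa' (fjoin_ubl _ _)).
exact: (fle_trans A bb' (fjoin_ubr _ _)).
Qed.

Lemma fmeetA (a b c : M) : fmeet a (fmeet b c) = fmeet (fmeet a b) c.
Proof.
have [l r] := (fmeet_lbl A, fmeet_lbr A).
apply: (fle_anti A); repeat apply: (fmeet_glb A).
all: first [exact: l | exact: r | exact: (fle_trans A (r _ _) (l _ _)) |
  exact: (fle_trans A (r _ _) (r _ _)) | exact: (fle_trans A (l _ _) (l _ _)) |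
  exact: (fle_trans A (l _ _) (r _ _))].
Qed.

Lemma fmeet_pcl (a : M) : fmeet (pc a) a = fbot M.
Proof. by apply/pc_spec; apply: (fle_refl A). Qed.

Lemma pc_fbot : pc (fbot M) = ftop M.
Proof. by apply: ftop_le_eq; apply/pc_spec/fle_fbot_eq/(fmeet_lbr A). Qed.

Lemma pc_ftop : pc (ftop M) = fbot M.
Proof.
apply: fle_fbot_eq; rewrite -(fmeet_pcl (ftop M)).
exact: (fmeet_glb A (fle_refl A _) (fle_ftop _)).
Qed.

Lemma pcpc_mono (x y : M) : fle x y -> fle (pc (pc x)) (pc (pc y)).
Proof. by move=> xy; apply/pc_anti/pc_anti. Qed.

Lemma pc_le_of_fjoin (a b : M) : fjoin a b = ftop M -> fle (pc a) b.
Proof.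
move=> ab1.
have : fle (pc a) (fmeet (pc a) (fjoin a b)).
  by rewrite ab1; apply: (fmeet_glb A (fle_refl A _) (fle_ftop _)).
move/(fle_trans A); apply; rewrite /fjoin (fdistr A).
apply: (fsup_least A) => _ [x [[->|->] ->]].
  by rewrite fmeet_pcl; apply: fbot_least.
exact: (fmeet_lbr A).
Qed.

Lemma rather_below_pcpc (a b : M) : rather_below a b -> fle (pc (pc a)) b.
Proof. exact: pc_le_of_fjoin. Qed.

Lemma rather_below_le (a b : M) : rather_below a b -> fle a b.
Proof. by move=> ab; apply: (fle_trans A (pc_pc_ge a)); apply: rather_below_pcpc. Qed.

Lemma fmeet_pcpc_eq0 (x y : M) : fmeet x y = fbot M ->
  fmeet (pc (pc x)) (pc (pc y)) = fbot M.
Proof. by move/pc_spec/pcpc_mono/pc_spec. Qed.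

Lemma fmeet_pcpcr (a x : M) : a = pc (pc a) ->
  fmeet a (pc (pc x)) = pc (pc (fmeet a x)).
Proof.
move=> a_reg; apply: (fle_anti A).
  apply/pc_spec; set q := pc (fmeet a x).
  have : fle (fmeet a q) (pc (pc (pc x))).
    rewrite pc3; apply/pc_spec.
    by rewrite -fmeetA [fmeet q x]fmeet_comm fmeetA fmeet_comm fmeet_pcl.
  move/pc_spec.
  by rewrite -!fmeetA [fmeet q _]fmeet_comm.
apply: (fmeet_glb A); last exact/pcpc_mono/(fmeet_lbr A).
by rewrite [X in fle _ X]a_reg; apply/pcpc_mono/(fmeet_lbl A).
Qed.

End FrameTheory.

Section CbarTheory.
Variable M : frame.
Let A := fax M.
Implicit Types (f g : cbar M) (r s t : rat).

Lemma cl_le f r t : r <= t -> fle (cl f t) (cl f r).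
Proof.
rewrite le_eqVlt => /orP[/eqP->|rt]; first exact: (fle_refl A).
by rewrite [X in fle _ X](cbar_r3 f r); apply: (fsup_ub A); exists t.
Qed.

Lemma cu_le_pc_cl f r s : s <= r -> fle (cu f s) (pc (cl f r)).
Proof. by move=> sr; apply/pc_spec; rewrite fmeet_comm cbar_r1. Qed.

Lemma pc_cl_le_cu f r s : r < s -> fle (pc (cl f r)) (cu f s).
Proof. by move=> rs; apply: pc_le_of_fjoin; apply: cbar_ext. Qed.

Lemma cl_rather_below f r s : r < s -> rather_below (cl f s) (cl f r).
Proof.
move=> rs; apply: ftop_le_eq; rewrite -(cbar_ext f rs) fjoinC.
exact: fjoin_mono (cu_le_pc_cl f (lexx s)) (fle_refl A _).
Qed.

Lemma cbar_le_of_cl f g : (forall r, fle (cl f r) (cl g r)) -> cbar_le f g.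
Proof.
move=> fg; split=> // s; rewrite [X in fle X _](cbar_r4 g s).
apply: (fsup_least A) => _ [r [rs ->]].
apply: (fle_trans A (cu_le_pc_cl g (lexx r))).
exact: (fle_trans A (pc_anti (fg r)) (pc_cl_le_cu f rs)).
Qed.

Lemma cbar_eq f g : (forall r, cl f r = cl g r) -> f = g.
Proof.
move=> fg.
have [_ gf_u] : cbar_le f g.
  by apply: cbar_le_of_cl => r; rewrite fg; apply: (fle_refl A).
have [_ fg_u] : cbar_le g f.
  by apply: cbar_le_of_cl => r; rewrite fg; apply: (fle_refl A).
case: f g fg gf_u fg_u => [lf uf ? ? ? ?] [lg ug ? ? ? ?] /= fg gf_u fg_u.
have el : lf = lg by apply: functional_extensionality.
have eu : uf = ug.
  by apply: functional_extensionality => s; apply: (fle_anti A).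
subst; congr Cbar; exact: proof_irrelevance.
Qed.

Lemma cbar_le_anti f g : cbar_le f g -> cbar_le g f -> f = g.
Proof. by move=> [fg _] [gf _]; apply: cbar_eq => r; apply: (fle_anti A). Qed.

Section LowerHalf.
Variable c : rat -> M.
Hypothesis c_r3 : forall r, c r = fsup (fun x => exists s, r < s /\ x = c s).
Hypothesis c_rather_below : forall r s, r < s -> rather_below (c s) (c r).

Definition upper_of_lower s : M := fsup (fun x => exists t, t < s /\ x = pc (c t)).

Lemma lower_upper_r1 r s : s <= r -> fmeet (c r) (upper_of_lower s) = fbot M.
Proof.
move=> sr; apply: fle_fbot_eq; rewrite (fdistr A).
apply: (fsup_least A) => _ [_ [[t [ts ->]] ->]].
have ctr : fle (c r) (c t).
  rewrite [X in fle _ X]c_r3; apply: (fsup_ub A).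
  by exists r; split => //; exact: lt_le_trans ts sr.
apply: (fle_trans A (fmeet_mono _ ctr)).
by rewrite fmeet_comm fmeet_pcl; apply: (fle_refl A).
Qed.

Lemma upper_of_lower_r4 s :
  upper_of_lower s = fsup (fun x => exists r, r < s /\ x = upper_of_lower r).
Proof.
apply: (fle_anti A); apply: (fsup_least A).
  move=> _ [t [ts ->]].
  have [tm ms] : t < (t + s) / 2 /\ (t + s) / 2 < s by split; lra.
  apply: (fle_trans A _ (fsup_ub A (ex_intro _ ((t + s) / 2) (conj ms erefl)))).
  by apply: (fsup_ub A); exists t.
move=> _ [r [rs ->]]; apply: (fsup_least A) => _ [t [tr ->]].
by apply: (fsup_ub A); exists t; split => //; exact: lt_trans tr rs.
Qed.

Lemma lower_upper_ext r s : r < s -> fjoin (c r) (upper_of_lower s) = ftop M.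
Proof.
move=> rs; have [rm ms] : r < (r + s) / 2 /\ (r + s) / 2 < s by split; lra.
apply: ftop_le_eq; rewrite -(c_rather_below rm) fjoinC.
apply: fjoin_mono (fle_refl A _) _.
by apply: (fsup_ub A); exists ((r + s) / 2).
Qed.

Definition cbar_of_lower : cbar M :=
  Cbar lower_upper_r1 c_r3 upper_of_lower_r4 lower_upper_ext.

End LowerHalf.

Section Opposite.
Variable f : cbar M.

Lemma opp_r1 r s : s <= r -> fmeet (cu f (- r)) (cl f (- s)) = fbot M.
Proof. by move=> sr; rewrite fmeet_comm cbar_r1 // lerN2. Qed.

Lemma opp_r3 r : cu f (- r) = fsup (fun x => exists s, r < s /\ x = cu f (- s)).
Proof.
rewrite cbar_r4; apply: fsup_ext => x; split => -[t [tr ->]].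
  by exists (- t); rewrite opprK ltrNr.
by exists (- t); rewrite ltrN2.
Qed.

Lemma opp_r4 s : cl f (- s) = fsup (fun x => exists r, r < s /\ x = cl f (- r)).
Proof.
rewrite cbar_r3; apply: fsup_ext => x; split => -[t [st ->]].
  by exists (- t); rewrite opprK ltrNl.
by exists (- t); rewrite ltrN2.
Qed.

Lemma opp_ext r s : r < s -> fjoin (cu f (- r)) (cl f (- s)) = ftop M.
Proof. by move=> rs; rewrite fjoinC cbar_ext // ltrN2. Qed.

Definition cbar_opp : cbar M := Cbar opp_r1 opp_r3 opp_r4 opp_ext.

End Opposite.

Lemma cbar_opp_le f g : cbar_le f g -> cbar_le (cbar_opp g) (cbar_opp f).
Proof. by move=> [fg_l fg_u]; split=> r /=. Qed.

Lemma cbar_oppK f : cbar_opp (cbar_opp f) = f.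
Proof. by apply: cbar_eq => r /=; rewrite opprK. Qed.

Section BooleanFrame.
Hypothesis M_boolean : forall x : M, pc (pc x) = x.

Lemma fjoin_pcr (x : M) : fjoin x (pc x) = ftop M.
Proof.
have : pc (fjoin x (pc x)) = fbot M.
  apply: fle_fbot_eq; rewrite -(fmeet_pcl (fjoin x (pc x))).
  apply: (fmeet_glb A (fle_refl A _)).
  exact: (fle_trans A (pc_anti (fjoin_ubl _ _)) (fjoin_ubr _ _)).
by move/(congr1 (@pc M)); rewrite M_boolean pc_fbot.
Qed.

Lemma le_rather_below (a b : M) : fle a b -> rather_below a b.
Proof.
move=> ab; apply: ftop_le_eq; rewrite -(fjoin_pcr a) fjoinC.
exact: fjoin_mono (fle_refl A _) ab.
Qed.

Section Lub.
Variable S : cbar M -> Prop.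

Definition lub_cl r : M := fsup (fun x => exists g, S g /\ x = cl g r).

Lemma lub_cl_r3 r : lub_cl r = fsup (fun x => exists s, r < s /\ x = lub_cl s).
Proof.
apply: (fle_anti A); apply: (fsup_least A).
  move=> _ [g [Sg ->]]; rewrite cbar_r3; apply: (fsup_least A) => _ [s [rs ->]].
  apply: (fle_trans A _ (fsup_ub A (ex_intro _ s (conj rs erefl)))).
  by apply: (fsup_ub A); exists g.
move=> _ [s [rs ->]]; apply: (fsup_least A) => _ [g [Sg ->]].
apply: (fle_trans A (cl_le g (ltW rs))).
by apply: (fsup_ub A); exists g.
Qed.

Lemma lub_cl_rather_below r s : r < s -> rather_below (lub_cl s) (lub_cl r).
Proof.
move=> rs; apply: le_rather_below.
by rewrite [X in fle _ X]lub_cl_r3; apply: (fsup_ub A); exists s.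
Qed.

Definition cbar_lub : cbar M := cbar_of_lower lub_cl_r3 lub_cl_rather_below.

Lemma cbar_lubP : is_lub (@cbar_le M) S cbar_lub.
Proof.
split=> [g Sg | h ub]; apply: cbar_le_of_cl => r /=.
  by apply: (fsup_ub A); exists g.
by apply: (fsup_least A) => _ [g [Sg ->]]; case: (ub g Sg).
Qed.

End Lub.

Lemma cbar_complete_lattice : complete_lattice (@cbar_le M).
Proof.
split.
- by move=> f; split=> r; apply: (fle_refl A).
- move=> f g h [fg_l fg_u] [gh_l gh_u]; split=> r.
    exact: (fle_trans A (fg_l r) (gh_l r)).
  exact: (fle_trans A (gh_u r) (fg_u r)).
- exact: cbar_le_anti.
- by move=> S; exists (cbar_lub S); apply: cbar_lubP.
Qed.

End BooleanFrame.
End CbarTheory.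


Section Booleanization.
Variable L : frame.
Let A := fax L.

Lemma Bval_inj (a b : Bcar L) : proj1_sig a = proj1_sig b -> a = b.
Proof.
case: a b => [a ?] [b ?] /= ab; subst b; congr exist; exact: proof_irrelevance.
Qed.

Lemma pcpc_fsup_eq (S T : L -> Prop) :
  (forall x, S x -> fle x (pc (pc (fsup T)))) ->
  (forall y, T y -> fle y (pc (pc (fsup S)))) ->
  pc (pc (fsup S)) = pc (pc (fsup T)).
Proof.
move=> ST TS; apply: (fle_anti A).
  by rewrite -[X in fle _ X](pc3 (pc _)); apply/pcpc_mono/(fsup_least A).
by rewrite -[X in fle _ X](pc3 (pc _)); apply/pcpc_mono/(fsup_least A).
Qed.

Lemma Booleanization_is_frame : is_frame (Booleanization L).
Proof.
split.
- by move=> x; apply: (fle_refl A).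
- by move=> x y z; apply: (fle_trans A).
- by move=> x y xy yx; apply/Bval_inj/(fle_anti A).
- move=> S x Sx; apply: (fle_trans A _ (pc_pc_ge _)).
  by apply: (fsup_ub A); exists x.
- move=> S b ub; rewrite /fle /= /Ble (proj2_sig b); apply: pcpc_mono.
  by apply: (fsup_least A) => _ [y [Sy ->]]; apply: ub.
- by move=> x y; apply: (fmeet_lbl A).
- by move=> x y; apply: (fmeet_lbr A).
- by move=> x y z; apply: (fmeet_glb A).
- move=> a S; apply: Bval_inj => /=.
  rewrite fmeet_pcpcr; last exact: proj2_sig a.
  rewrite (fdistr A); congr (pc (pc _)).
  apply: fsup_ext => x; split.
    by move=> [_ [[y [Sy ->]] ->]]; exists (Bmeet a y); split => //; exists y.
  by move=> [_ [[y [Sy ->]] ->]]; exists (proj1_sig y); split => //; exists y.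
Qed.

Definition Bframe : frame := Frame Booleanization_is_frame.

Definition Breg (x : L) : Bframe := exist _ (pc (pc x)) (regular_pcpc x).

Lemma Bframe_fbot : proj1_sig (fbot Bframe) = fbot L.
Proof.
rewrite /= (_ : fsup _ = fbot L) ?pc_fbot ?pc_ftop //.
by apply: fsup_ext => x; split => [[y []]|[]].
Qed.

Lemma Bframe_ftop : proj1_sig (ftop Bframe) = ftop L.
Proof.
apply: ftop_le_eq; apply: (fle_trans A _ (pc_pc_ge _)).
by apply: (fsup_ub A); exists (Breg (ftop L)); rewrite /= pc_ftop pc_fbot.
Qed.

Lemma Bframe_pc (a : Bframe) : proj1_sig (pc a) = pc (proj1_sig a).
Proof.
apply: (fle_anti A).
  by apply/pc_spec; rewrite -Bframe_fbot -(fmeet_pcl a).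
have reg : pc (proj1_sig a) = pc (pc (pc (proj1_sig a))) by rewrite pc3.
have : fle (exist _ _ reg : Bframe) (pc a).
  by apply/pc_spec/Bval_inj; rewrite Bframe_fbot /= fmeet_pcl.
by [].
Qed.

Lemma Bframe_boolean (a : Bframe) : pc (pc a) = a.
Proof. by apply: Bval_inj; rewrite !Bframe_pc -(proj2_sig a). Qed.

Lemma Breg_fsup (S : L -> Prop) :
  Breg (fsup S) = fsup (fun y => exists x, S x /\ y = Breg x).
Proof.
apply: Bval_inj; apply: pcpc_fsup_eq.
  move=> x Sx; apply: (fle_trans A (pc_pc_ge x)); apply: (fle_trans A _ (pc_pc_ge _)).
  by apply: (fsup_ub A); exists (Breg x); split => //; exists x.
by move=> _ [_ [[x [Sx ->]] ->]]; apply/pcpc_mono/(fsup_ub A).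
Qed.

Lemma Breg_fsup_image (P : rat -> Prop) (u : rat -> L) :
  Breg (fsup (fun x => exists s, P s /\ x = u s)) =
  fsup (fun y => exists s, P s /\ y = Breg (u s)).
Proof.
rewrite Breg_fsup; apply: fsup_ext => y; split.
  by move=> [_ [[s [Ps ->]] ->]]; exists s.
by move=> [s [Ps ->]]; exists (u s); split => //; exists s.
Qed.

Lemma Breg_fjoin (a b : L) : Breg (fjoin a b) = fjoin (Breg a) (Breg b).
Proof.
rewrite Breg_fsup; apply: fsup_ext => y.
split=> [[x [[->|->] ->]]|[->|->]]; [left | right | exists a | exists b]; auto.
Qed.

Lemma Breg_ftop : Breg (ftop L) = ftop Bframe.
Proof. by apply: Bval_inj; rewrite Bframe_ftop /= pc_ftop pc_fbot. Qed.

Section PcpcCbar.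
Variable f : cbar L.

Lemma pcpc_r1 r s : s <= r -> fmeet (Breg (cl f r)) (Breg (cu f s)) = fbot Bframe.
Proof.
by move=> sr; apply: Bval_inj; rewrite Bframe_fbot; apply/fmeet_pcpc_eq0/cbar_r1.
Qed.

Lemma pcpc_r3 r :
  Breg (cl f r) = fsup (fun y => exists s, r < s /\ y = Breg (cl f s)).
Proof. by rewrite cbar_r3 Breg_fsup_image. Qed.

Lemma pcpc_r4 s :
  Breg (cu f s) = fsup (fun y => exists r, r < s /\ y = Breg (cu f r)).
Proof. by rewrite cbar_r4 Breg_fsup_image. Qed.

Lemma pcpc_ext r s : r < s -> fjoin (Breg (cl f r)) (Breg (cu f s)) = ftop Bframe.
Proof. by move=> rs; rewrite -Breg_fjoin cbar_ext // Breg_ftop. Qed.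

Definition pcpc_cbar : cbar Bframe := Cbar pcpc_r1 pcpc_r3 pcpc_r4 pcpc_ext.

End PcpcCbar.

Lemma pcpc_cbar_opp (f : cbar L) : pcpc_cbar (cbar_opp f) = cbar_opp (pcpc_cbar f).
Proof. exact: cbar_eq. Qed.

Lemma pcpc_cbar_le (f g : cbar L) : cbar_le (pcpc_cbar f) (pcpc_cbar g) <-> cbar_le f g.
Proof.
split=> [[fg _] | [fg _]]; apply: cbar_le_of_cl => r; last exact/pcpc_mono/fg.
rewrite [X in fle X _]cbar_r3; apply: (fsup_least A) => _ [s [rs ->]].
apply: (fle_trans A (pc_pc_ge _)); apply: (fle_trans A (fg s)).
exact/rather_below_pcpc/cl_rather_below.
Qed.

End Booleanization.

(* [tau s] maps [[0, 1)] decreasingly onto [(-oo, s]]. *)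
Definition tau (s p : rat) := s - p / (1 - p).

Lemma tau0 s : tau s 0 = s.
Proof. by rewrite /tau mul0r subr0. Qed.

Lemma tau_le s p : 0 <= p -> p < 1 -> tau s p <= s.
Proof. by move=> p_ge0 p_lt1; rewrite /tau gerBl divr_ge0 //; lra. Qed.

Lemma tau_sep (s r1 r2 : rat) : r1 < r2 -> r2 < s -> exists p1 p2,
  [/\ 0 <= p1, p1 < p2, p2 < 1, r1 < tau s p2 &
   forall p, 0 <= p -> p < 1 -> r2 < tau s p -> p < p1].
Proof.
(* [tau s (d / (1 + d)) = s - d]: the witnesses are the preimages of [r2]
   and of the midpoint of [r1] and [r2]. *)
move=> r12 r2s; set D := s - r2; set E := s - (r1 + r2) / 2.
have D_gt0 : 0 < D by rewrite /D; lra.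
have DE : D < E by rewrite /D /E; lra.
exists (D / (1 + D)), (E / (1 + E)); split.
- by rewrite divr_ge0 //; lra.
- rewrite ltr_pdivrMr; last lra.
  by rewrite mulrAC ltr_pdivlMr; [nra | lra].
- by rewrite ltr_pdivrMr; lra.
- have -> : tau s (E / (1 + E)) = s - E.
    by rewrite /tau; congr (_ - _); field; apply/andP; split; lra.
  by rewrite /E; lra.
- move=> p p_ge0 p_lt1; rewrite /tau => r2p.
  have : p / (1 - p) < D by rewrite /D; lra.
  rewrite ltr_pdivrMr; last lra.
  by move=> pD; rewrite ltr_pdivlMr; [nra | lra].
Qed.

Section Urysohn.
Variables (L : frame) (c : rat -> L) (s : rat).
Hypothesis c_scale :
  forall p q, 0 <= p -> p < q -> q <= 1 -> rather_below (c p) (c q).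
Let A := fax L.

Lemma scale_le p q : 0 <= p -> p <= q -> q <= 1 -> fle (c p) (c q).
Proof.
move=> p_ge0; rewrite le_eqVlt => /orP[/eqP-> _|pq q_le1]; first exact: (fle_refl A).
exact/rather_below_le/c_scale.
Qed.

(* The function is [> tau s p] on [c p]: it is [>= s] on [c 0] and [-oo] off [c 1]. *)
Definition urysohn_cl r : L :=
  fsup (fun z => exists p, [/\ 0 <= p, p < 1, r < tau s p & z = c p]).

Lemma urysohn_cl_r3 r :
  urysohn_cl r = fsup (fun x => exists t, r < t /\ x = urysohn_cl t).
Proof.
apply: (fle_anti A); apply: (fsup_least A).
  move=> _ [p [p_ge0 p_lt1 rp ->]].
  have [rm mp] : r < (r + tau s p) / 2 /\ (r + tau s p) / 2 < tau s p by split; lra.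
  apply: (fle_trans A _ (fsup_ub A (ex_intro _ _ (conj rm erefl)))).
  by apply: (fsup_ub A); exists p.
move=> _ [t [rt ->]]; apply: (fsup_least A) => _ [p [p_ge0 p_lt1 tp ->]].
by apply: (fsup_ub A); exists p; split => //; exact: lt_trans tp.
Qed.

Lemma urysohn_cl_eq0 r : s <= r -> urysohn_cl r = fbot L.
Proof.
move=> sr; apply: fle_fbot_eq; apply: (fsup_least A) => _ [p [p_ge0 p_lt1 rp ->]].
by have := tau_le s p_ge0 p_lt1; lra.
Qed.

Lemma urysohn_cl_le r : fle (urysohn_cl r) (c 1).
Proof.
apply: (fsup_least A) => _ [p [p_ge0 p_lt1 _ ->]].
exact: scale_le p_ge0 (ltW p_lt1) (lexx 1).
Qed.

Lemma scale0_le_urysohn_cl r : r < s -> fle (c 0) (urysohn_cl r).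
Proof. by move=> rs; apply: (fsup_ub A); exists 0; rewrite tau0. Qed.

Lemma urysohn_cl_rather_below r1 r2 :
  r1 < r2 -> rather_below (urysohn_cl r2) (urysohn_cl r1).
Proof.
move=> r12; case: (ltP r2 s) => [r2s | sr2]; last first.
  by rewrite /rather_below urysohn_cl_eq0 // pc_fbot; apply/ftop_le_eq/fjoin_ubl.
have [p1 [p2 [p1_ge0 p12 p2_lt1 r1p2 r2p]]] := tau_sep r12 r2s.
apply: ftop_le_eq; rewrite -(c_scale p1_ge0 p12 (ltW p2_lt1)); apply: fjoin_mono.
  apply: pc_anti; apply: (fsup_least A) => _ [p [p_ge0 p_lt1 r2p' ->]].
  exact: scale_le p_ge0 (ltW (r2p p p_ge0 p_lt1 r2p')) (ltW (lt_trans p12 p2_lt1)).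
by apply: (fsup_ub A); exists p2; split => //; exact: le_trans p1_ge0 (ltW p12).
Qed.

Definition urysohn : cbar L := cbar_of_lower urysohn_cl_r3 urysohn_cl_rather_below.

End Urysohn.

Section Density.
Variable L : frame.
Hypothesis L_creg : completely_regular L.
Let A := fax L.

Lemma completely_below_cl_le (g h : cbar (Bframe L)) r s a :
  (forall f, cbar_le (pcpc_cbar f) g -> cbar_le (pcpc_cbar f) h) ->
  r < s -> completely_below a (proj1_sig (cl g s)) -> fle a (proj1_sig (cl h r)).
Proof.
move=> gh rs [c [c0 [c1 c_scale]]].
have fg : cbar_le (pcpc_cbar (urysohn s c_scale)) g.
  apply: cbar_le_of_cl => t; rewrite /fle /= /Ble /=.
  rewrite [X in fle _ X](proj2_sig (cl g t)); apply: pcpc_mono.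
  case: (ltP t s) => [ts | st]; last by rewrite urysohn_cl_eq0 //; apply: fbot_least.
  apply: (fle_trans A (urysohn_cl_le s c_scale t)); rewrite c1.
  exact: (cl_le g (ltW ts)).
have [fh _] := gh _ fg.
rewrite -c0; apply: (fle_trans A (scale0_le_urysohn_cl c rs)).
exact: (fle_trans A (pc_pc_ge _) (fh r)).
Qed.

Lemma pcpc_cbar_join_dense (g : cbar (Bframe L)) :
  is_lub (@cbar_le (Bframe L)) (fun z => exists f, z = pcpc_cbar f /\ cbar_le z g) g.
Proof.
split=> [_ [f [-> fg]] // | h ub]; apply: cbar_le_of_cl => r.
rewrite [X in fle X _](cbar_r3 g r); apply: (fsup_least (fax (Bframe L))).
move=> _ [s [rs ->]]; rewrite /fle /= /Ble [X in fle X _](L_creg (proj1_sig (cl g s))).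
apply: (fsup_least A) => a ab; apply: completely_below_cl_le rs ab => f fg.
exact: ub (ex_intro _ f (conj erefl fg)).
Qed.

Lemma pcpc_cbar_meet_dense (g : cbar (Bframe L)) :
  is_glb (@cbar_le (Bframe L)) (fun z => exists f, z = pcpc_cbar f /\ cbar_le g z) g.
Proof.
split=> [_ [f [-> gf]] // | h lb].
have [_ least] := pcpc_cbar_join_dense (cbar_opp g).
rewrite -[h]cbar_oppK -[g]cbar_oppK; apply/cbar_opp_le/least => _ [f [-> fg]].
have gf : cbar_le g (pcpc_cbar (cbar_opp f)).
  by rewrite pcpc_cbar_opp -[g]cbar_oppK; apply: cbar_opp_le.
rewrite -[pcpc_cbar f]cbar_oppK -pcpc_cbar_opp.
by apply/cbar_opp_le/lb; exists (cbar_opp f).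
Qed.

End Density.

Theorem corollary3p10 (L : frame) (hL : completely_regular L) :
  exists e : cbar L -> cbar (Booleanization L),
    DM_completion (@cbar_le L) (@cbar_le (Booleanization L)) e.
Proof.
exists (@pcpc_cbar L); split.
- exact: cbar_complete_lattice (@Bframe_boolean L).
- by move=> f g; rewrite pcpc_cbar_le.
- exact: pcpc_cbar_join_dense.
- exact: pcpc_cbar_meet_dense.
Qed.
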